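(* Let $\Delta \subset \mathbb{R}^2$ be a convex compact domain with piecewise-linear boundary, let $\chi$ be a finite set of nodes in $\Delta$ containing the fence nodes $\chi_f$, let $\chi_{int} = \chi \setminus \chi_f$, let $\mathcal{R}$ be the 2-skeleton of the Rips complex of $\chi$ with parameter $r_b > 0$, and let $\mathcal{F} \subseteq \mathcal{R}$ be the fence subcomplex. Assume that $(\mathcal{R},\mathcal{F})$ passes the de Silva–Ghrist criterion and that $H_2(\mathcal{R}) = 0$. Let $w \in \chi_{int}$ and let $\mathcal{R}_w$ be the maximal subcomplex of $\mathcal{R}$ not containing the vertex $w$. Then $(\mathcal{R}_w,\mathcal{F})$ passes the de Silva–Ghrist criterion if and only if $H_1(\mathrm{Lk}(w)) = 0$, where $\mathrm{Lk}(w)$ is the link of $w$ in $\mathcal{R}$.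
   Context: The fence nodes $\chi_f$ are the vertices of $\partial\Delta$, cyclically ordered, with cyclically consecutive fence nodes at distance less than $r_b$. The Rips complex has a simplex for every nonempty subset of $\chi$ whose points are pairwise at distance $< r_b$; $\mathcal{R}$ is its 2-skeleton (simplices of dimension $\le 2$). The fence $\mathcal{F}$ is the subcomplex consisting of the fence nodes and the edges joining cyclically consecutive fence nodes. Homology is with $\mathbb{Z}_2$ coefficients. For a subcomplex $\mathcal{K} \supseteq \mathcal{F}$, a class in $H_2(\mathcal{K},\mathcal{F})$ is fundamental if its image under the connecting homomorphism $H_2(\mathcal{K},\mathcal{F}) \to H_1(\mathcal{F})$ is nonzero, and $(\mathcal{K},\mathcal{F})$ passes the de Silva–Ghrist criterion if such a class exists. The link of a vertex $w$ in a simplicial complex $X$ is $\mathrm{Lk}(w,X) = \{\sigma \in X : w \notin \sigma,\ \sigma \cup \{w\} \in X\}$. *)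

From HB Require Import structures.
From mathcomp Require Import all_boot all_order all_algebra.
From mathcomp Require Import all_classical all_reals all_analysis.
Set Implicit Arguments. Unset Strict Implicit. Unset Printing Implicit Defensive.
Import Order.TTheory GRing.Theory Num.Theory.
Import numFieldTopology.Exports numFieldNormedType.Exports.
Local Open Scope classical_set_scope.
Local Open Scope ring_scope.

Notation pt R := (R * R)%type.
Section Geometry.
Variable R : realType.
Local Notation pt := (R * R)%type.

Definition eucl_dist (p q : pt) : R :=
  Num.sqrt ((p.1 - q.1) ^+ 2 + (p.2 - q.2) ^+ 2).

Definition lincomb (a b : pt) (t : R) : pt :=
  ((1 - t) * a.1 + t * b.1, (1 - t) * a.2 + t * b.2).

Definition pseg (a b : pt) : set pt :=
  [set p | exists t : R, 0 <= t <= 1 /\ p = lincomb a b t].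

Definition convex_pl (D : set pt) : Prop :=
  forall a b t, D a -> D b -> 0 <= t <= 1 -> D (lincomb a b t).

Definition bdry_set (D : set pt) : set pt := closure D `\` interior D.
End Geometry.
Local Close Scope classical_set_scope.

(* A (finite abstract) simplicial complex on the vertex type V is a set of
   simplices {set {set V}}; a k-simplex has k+1 vertices.  A Z_2 k-zchain is
   a set of k-simplices (coefficient 1 on the simplices it contains). *)
Section Homology.
Variable V : finType.
Implicit Types (K : {set {set V}}) (c : {set {set V}}).

Definition zchain K (k : nat) c : bool :=
  (c \subset K) && [forall s in c, #|s| == k.+1].

Definition bd (k : nat) c : {set {set V}} :=
  [set t : {set V} | (#|t| == k) &&
     odd #|[set s in c | (#|s| == k.+1) && (t \subset s)]|].

Definition zcycle K (k : nat) c : bool := zchain K k c && (bd k c == finset.set0).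

Definition zboundary K (k : nat) c : Prop :=
  exists d, zchain K k.+1 d /\ bd k.+1 d = c.

Definition H_trivial K (k : nat) : Prop :=
  forall c, zcycle K k c -> zboundary K k c.

Definition rel_cycle2 K F c : bool := zchain K 2 c && zchain F 1 (bd 2 c).

(* The connecting homomorphism H_2(K,F) -> H_1(F) sends the class of a
   relative 2-zcycle c to the class of its zboundary in H_1(F); it is nonzero
   iff bd c is not a zboundary in F.  (K,F) passes the de Silva--Ghrist
   criterion iff some class of H_2(K,F) has nonzero image. *)
Definition dSG_criterion K F : Prop :=
  exists c, rel_cycle2 K F c /\ ~ zboundary F 1 (bd 2 c).

Definition delete_vertex K (w : V) : {set {set V}} := [set s in K | w \notin s].

Definition vlink K (w : V) : {set {set V}} :=
  [set s in K | (w \notin s) && ((w |: s) \in K)].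
End Homology.

Section Rips.
Variables (R : realType) (V : finType) (pos : V -> pt R) (rb : R).

Definition rips2 : {set {set V}} :=
  [set s : {set V} | (s != finset.set0) && (#|s| <= 3)%N
     && [forall x in s, forall y in s, eucl_dist (pos x) (pos y) < rb]].

Definition fence (n : nat) (f : 'I_n -> V) : {set {set V}} :=
  [set [set f i] | i : 'I_n] :|: [set [set f i; f (ordS i)] | i : 'I_n].
End Rips.

From HB Require Import structures.
From mathcomp Require Import all_boot all_order all_algebra.
From mathcomp Require Import all_classical all_reals all_analysis.
From mathcomp Require Import ring lra zify.
Import Order.TTheory GRing.Theory Num.Theory.
Import numFieldTopology.Exports numFieldNormedType.Exports.
Set Implicit Arguments. Unset Strict Implicit. Unset Printing Implicit Defensive.

(* If Lk(w) has no nonzero 1-cycle, no triangle of a relative 2-cycle c of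
   (R, F) contains w: the edges s \ w of the triangles s of c through w form a
   1-cycle of Lk(w), because the boundary of c lies in the fence, which misses
   the interior node w; and since R has no 3-simplices, Lk(w) has no triangles,
   so this cycle is zero. Hence every fundamental class of (R, F) already lives
   in R_w.

   Conversely, (R_w, F) never passes the criterion. The boundary of a
   fundamental relative cycle c is a nonempty set of fence edges of even degree
   at every node, hence the whole fence. A generic ray from p = pos w crosses
   exactly one fence edge, so summing over the triangles of c, some triangle T
   has an odd number of edges crossed by the ray, which puts p in the convex
   hull of T. Every point of that hull is at distance < r_b from the vertices
   of T, so w and T span a 4-clique of the Rips complex, and the boundary of
   that tetrahedron is a nonzero 2-cycle of R, contradicting H_2(R) = 0. *)

Section Chains.
Variable V : finType.
Implicit Types (K F c : {set {set V}}).
Local Open Scope nat_scope.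

Lemma odd_sum (I : Type) (r : seq I) (P : pred I) (F : I -> nat) :
  odd (\sum_(i <- r | P i) F i) = \big[addb/false]_(i <- r | P i) odd (F i).
Proof. exact: (big_morph odd oddD). Qed.

Lemma odd_sum_exists (I : finType) (P : pred I) (F : I -> nat) :
  odd (\sum_(i | P i) F i) -> exists2 i, P i & odd (F i).
Proof.
move=> h; have /existsP [i /andP [Pi oi]] : [exists i, P i && odd (F i)].
  apply: contraLR h => /existsPn none; rewrite odd_sum big1 // => i Pi.
  by move: (none i); rewrite Pi /= => /negbTE.
by exists i.
Qed.

Lemma sum_bool_card (A : {set {set V}}) (g : {set V} -> bool) :
  \sum_(e in A) (g e : nat) = #|[set e in A | g e]|.
Proof.
rewrite -sum1_card big_mkcond [RHS]big_mkcond /=.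
by apply: eq_bigr => e _; rewrite !inE; case: (e \in A); case: (g e).
Qed.

Lemma card3P (T : {set V}) : #|T| = 3 ->
  exists a b x, [/\ a != b, a != x, b != x & T = [set a; b; x]].
Proof.
move=> T3; have /card_gt0P [a aT] : 0 < #|T| by rewrite T3.
have /cards2P [b [x [bx Ta]]] : #|T :\ a| == 2.
  by move: T3; rewrite (cardsD1 a T) aT add1n => -[->].
have : (b \in T :\ a) && (x \in T :\ a) by rewrite Ta !inE !eqxx orbT.
rewrite !inE => /andP [/andP [ba _] /andP [xa _]].
exists a, b, x; split => //; rewrite 1?eq_sym //.
apply/setP => y; rewrite !inE; case: (eqVneq y a) => [->|ya] //=.
by move/setP/(_ y): Ta; rewrite !inE ya.
Qed.

Lemma in_set3P (a b x y : V) : y \in [set a; b; x] -> [\/ y = a, y = b | y = x].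
Proof.
by rewrite !inE => /orP [/orP [] /eqP|/eqP]; [apply: Or31|apply: Or32|apply: Or33].
Qed.

Lemma card2_subset3 (a b x : V) (e : {set V}) : a != b -> a != x -> b != x ->
  ((#|e| == 2) && (e \subset [set a; b; x])) =
  [|| e == [set a; b], e == [set a; x] | e == [set b; x]].
Proof.
have set2C (y z : V) : [set y; z] = [set z; y] by apply/setP => u; rewrite !inE orbC.
move=> ab ax bx; apply/idP/idP.
  case/andP => /cards2P [y [z [yz ->]]] /fintype.subsetP hs.
  have /in_set3P hy : y \in [set a; b; x] by apply: hs; rewrite !inE eqxx.
  have /in_set3P hz : z \in [set a; b; x] by apply: hs; rewrite !inE eqxx orbT.
  move: yz; case: hy => ->; case: hz => ->; rewrite ?eqxx // => _;
    by rewrite ?(set2C b a) ?(set2C x a) ?(set2C x b) ?eqxx ?orbT.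
case/orP => [|/orP []] /eqP ->; rewrite cards2 ?ab ?ax ?bx /=;
  by apply/fintype.subsetP => y; rewrite !inE => /orP [] ->; rewrite ?orbT.
Qed.

Lemma sum_edges_triangle (a b x : V) (g : {set V} -> nat) :
  a != b -> a != x -> b != x ->
  \sum_(e : {set V} | (#|e| == 2) && (e \subset [set a; b; x])) g e =
  g [set a; b] + g [set a; x] + g [set b; x].
Proof.
move=> ab ax bx.
have neq2 u (A B : {set V}) : u \in A -> u \notin B -> A != B.
  by move=> uA; apply: contraNneq => <-.
have d1 : [set a; b] != [set a; x].
  by apply: (neq2 b); rewrite !inE ?eqxx ?orbT // negb_or eq_sym ab bx.
have d2 : [set a; b] != [set b; x] by apply: (neq2 a); rewrite !inE ?eqxx // negb_or ab ax.
have d3 : [set a; x] != [set b; x] by apply: (neq2 a); rewrite !inE ?eqxx // negb_or ab ax.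
rewrite (eq_bigl (mem ([set a; b] |: ([set a; x] |: [set [set b; x]])))); last first.
  by move=> e; rewrite card2_subset3 // !inE.
rewrite big_setU1 /=; last by rewrite !inE negb_or d1 d2.
rewrite big_setU1 /=; last by rewrite !inE d3.
by rewrite big_set1 addnA.
Qed.

Lemma bd_set0 k : bd k (finset.set0 : {set {set V}}) = finset.set0.
Proof.
apply/setP => t; rewrite !inE.
rewrite (_ : [set s in finset.set0 | _] = finset.set0) ?cards0 ?andbF //.
by apply/setP => s; rewrite !inE.
Qed.

(* Over Z_2, the boundary map is adjoint to the map sending a triangle to the
   sum of its three edges. *)
Lemma odd_sum_bd2 c (g : {set V} -> bool) :
  odd (\sum_(e in bd 2 c) g e) =
  odd (\sum_(T in c | #|T| == 3) \sum_(e : {set V} | (#|e| == 2) && (e \subset T)) g e).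
Proof.
apply: esym; rewrite (exchange_big_dep (fun e : {set V} => #|e| == 2)
  (F := fun _ e => nat_of_bool (g e))) /=; last by move=> ? ? _ /andP [].
pose N (e : {set V}) := #|[set s in c | (#|s| == 3) && (e \subset s)]|.
rewrite (eq_bigr (fun e => g e * N e)); last first.
  move=> e e2; rewrite sum_nat_const mulnC; congr (_ * _).
  by apply: eq_card => s; rewrite !inE e2 unfold_in /= andbA.
rewrite !odd_sum big_mkcond [RHS]big_mkcond /=.
apply: eq_bigr => e _; rewrite !inE.
by case: (#|e| == 2) => //; rewrite oddM /N; case: (g e); case: (odd #|_|).
Qed.

Lemma bd2_degree_even c (v : V) :
  (forall T, T \in c -> #|T| = 3) -> ~~ odd (\sum_(e in bd 2 c) (v \in e)).
Proof.
move=> c3; rewrite odd_sum_bd2 odd_sum big1 //= => T /andP [Tc _].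
case: (card3P (c3 T Tc)) => a [b [x [ab ax bx ->]]].
rewrite sum_edges_triangle // !inE.
case: (eqVneq v a) => [va|]; case: (eqVneq v b) => [vb|]; case: (eqVneq v x) => [vx|] //=.
- by rewrite -va -vb eqxx in ab.
- by rewrite -va -vb eqxx in ab.
- by rewrite -va -vx eqxx in ax.
- by rewrite -vb -vx eqxx in bx.
Qed.

Lemma bd2_tetrahedron (Q : {set V}) :
  #|Q| = 4 -> bd 2 [set s in powerset Q | #|s| == 3] = finset.set0.
Proof.
move=> Q4; apply/setP => t; rewrite !inE.
case t2: (#|t| == 2) => //=.
have [tQ|tQ] := boolP (t \subset Q); last first.
  rewrite (_ : [set _ in _ | _] = finset.set0) ?cards0 //.
  apply/setP => s; rewrite !inE; apply/negP => /and3P [/andP [sQ _] _ ts].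
  by rewrite (fintype.subset_trans ts sQ) in tQ.
rewrite (_ : [set _ in _ | _] = [set y |: t | y in Q :\: t]).
  rewrite card_in_imset; first by rewrite cardsDS // Q4 (eqP t2).
  move=> y z; rewrite !inE => /andP [yt _] /andP [zt _] e.
  have : y \in z |: t by rewrite -e !inE eqxx.
  by rewrite !inE (negbTE yt) orbF => /eqP.
apply/setP => s; rewrite !inE; apply/idP/imsetP.
  case/and3P => /andP [sQ /eqP s3] _ ts.
  have /cards1P [y ey] : #|s :\: t| == 1 by rewrite cardsDS // s3 (eqP t2).
  have : y \in s :\: t by rewrite ey !inE.
  rewrite !inE => /andP [yt ys].
  exists y; first by rewrite !inE yt (fintype.subsetP sQ).
  apply/setP => u; rewrite !inE.
  have [ut|ut] := boolP (u \in t); first by rewrite orbT (fintype.subsetP ts).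
  rewrite orbF; apply/idP/idP => [us|/eqP -> //].
  have : u \in s :\: t by rewrite !inE ut us.
  by rewrite ey inE.
case=> y; rewrite !inE => /andP [yt yQ] ->.
rewrite cardsU1 yt (eqP t2) /= andbT; apply/andP; split.
  by apply/fintype.subsetP => u; rewrite !inE => /orP [/eqP -> //|/(fintype.subsetP tQ)].
by apply/fintype.subsetP => u ut; rewrite !inE ut orbT.
Qed.

Lemma val_iter_ordS n (i : 'I_n) k : val (iter k (@ordS n) i) = (i + k) %% n.
Proof.
elim: k => [|k IH] /=; first by rewrite addn0 modn_small.
by rewrite IH -addn1 modnDml addn1 addnS.
Qed.

Lemma iter_ordS_onto n (i j : 'I_n) : exists k, iter k (@ordS n) i = j.
Proof.
exists (j + n - i); apply: val_inj; rewrite val_iter_ordS.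
have hi : i <= j + n by rewrite (leq_trans (ltnW (ltn_ord i))) // leq_addl.
by rewrite addnBA // addKn modnDr modn_small.
Qed.

Lemma ordSS_neq n (i : 'I_n) : 2 < n -> ordS (ordS i) != i.
Proof.
move=> n3; apply/negP => /eqP /(congr1 val).
rewrite -[ordS (ordS i)]/(iter 2 (@ordS n) i) val_iter_ordS /=.
have := ltn_ord i; move: (nat_of_ord i) => m hm.
case: (ltnP (m + 2) n) => h; first by rewrite modn_small //; lia.
rewrite -(subnK h) modnDr modn_small; lia.
Qed.

Lemma cycle_edges_inj n (f : 'I_n -> V) : 2 < n -> injective f ->
  injective (fun i => [set f i; f (ordS i)]).
Proof.
move=> n3 finj i j eij.
have : (f i \in [set f j; f (ordS j)]) && (f (ordS i) \in [set f j; f (ordS j)]).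
  by rewrite -eij !inE !eqxx orbT.
rewrite !inE => /andP [] /orP [] /eqP /finj e1 /orP [] /eqP /finj e2 //.
- by move: (ordSS_neq j n3); rewrite -e1 e2 eqxx.
- exact: ordS_inj.
Qed.

(* A missing edge next to a present one would leave their common vertex with
   degree 1. *)
Lemma cycle_edges_even_degree n (f : 'I_n -> V) (B : {set {set V}}) :
  injective f -> (forall e, e \in B -> exists i, e = [set f i; f (ordS i)]) ->
  B != finset.set0 -> (forall v, ~~ odd (\sum_(e in B) (v \in e))) ->
  forall i, [set f i; f (ordS i)] \in B.
Proof.
move=> finj hB /set0Pn [e0 e0B] even.
have step i : [set f i; f (ordS i)] \in B -> [set f (ordS i); f (ordS (ordS i))] \in B.
  move=> iB; apply/negPn/negP => hn; have := even (f (ordS i)).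
  rewrite sum_bool_card (_ : [set e in B | _] = [set [set f i; f (ordS i)]]) ?cards1 //.
  apply/setP => e; rewrite !inE; apply/idP/idP => [|/eqP ->]; last first.
    by rewrite iB !inE eqxx orbT.
  case/andP => eB; case: (hB e eB) => j ej; rewrite ej !inE => /orP [] /eqP /finj hj.
    by move: eB; rewrite ej -hj (negbTE hn).
  by move/ordS_inj: hj => ->.
case: (hB e0 e0B) => i0 ei0; rewrite ei0 in e0B.
have iter_in k : [set f (iter k (@ordS n) i0); f (ordS (iter k (@ordS n) i0))] \in B.
  by elim: k => [//|k IH] /=; apply: step.
by move=> j; case: (iter_ordS_onto i0 j) => k <-.
Qed.

Lemma bd2_fundamental_fence K n (f : 'I_n -> V) c : injective f ->
  rel_cycle2 K (fence f) c -> ~ zboundary (fence f) 1 (bd 2 c) ->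
  bd 2 c = [set [set f i; f (ordS i)] | i : 'I_n].
Proof.
move=> finj /andP [/andP [_ /forall_inP c3] /andP [/fintype.subsetP bdF /forall_inP bd2]] nb.
have bd_neq0 : bd 2 c != finset.set0.
  apply/negP => /eqP bd0; apply: nb; exists finset.set0; split; last by rewrite bd_set0 bd0.
  by rewrite /zchain finset.sub0set; apply/forall_inP => s; rewrite inE.
have edge e : e \in bd 2 c -> exists i, e = [set f i; f (ordS i)].
  move=> eb; move: (bd2 e eb) (bdF e eb); rewrite inE => /eqP e2.
  case/orP => /imsetP [i _ ei]; last by exists i.
  by move: e2; rewrite ei cards1.
have all_edges := cycle_edges_even_degree finj edge bd_neq0
  (fun v => bd2_degree_even v (fun T Tc => eqP (c3 T Tc))).
by apply/setP => e; apply/idP/imsetP => [/edge [i ->]|[i _ ->]]; [exists i|].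
Qed.

Lemma fence_avoid n (f : 'I_n -> V) (w : V) :
  w \notin [set f i | i : 'I_n] -> {in fence f, forall e : {set V}, w \notin e}.
Proof.
move=> hw; have fw i : f i != w by apply: contraNneq hw => <-; apply: imset_f.
move=> e; rewrite inE => /orP [] /imsetP [i _ ->]; rewrite !inE.
  by rewrite eq_sym fw.
by rewrite negb_or !(eq_sym w) !fw.
Qed.

Lemma cardsD1_triangle (s : {set V}) (w : V) : #|s| = 3 -> w \in s -> #|s :\ w| = 2.
Proof. by move=> s3 ws; move: s3; rewrite (cardsD1 w) ws add1n => -[]. Qed.

Definition chain_link c (w : V) : {set {set V}} :=
  [set s :\ w | s in [set s in c | w \in s]].

Lemma bd_chain_link c (w : V) : (forall s, s \in c -> #|s| = 3) ->
  {in bd 2 c, forall e : {set V}, w \notin e} -> bd 1 (chain_link c w) = finset.set0.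
Proof.
move=> c3 bdw; apply/setP => u; rewrite !inE; apply/negP => /andP [/cards1P [v ->]].
case: (eqVneq v w) => [->|vw].
  rewrite (_ : [set _ in _ | _] = finset.set0) ?cards0 //.
  apply/setP => e; rewrite !inE; apply/negP => /and3P [/imsetP [s _ ->] _].
  by rewrite finset.sub1set setD11.
pose A := [set s in c | (#|s| == 3) && ([set w; v] \subset s)].
have inj_del : {in A &, injective (fun s => s :\ w)}.
  move=> s1 s2; rewrite !inE => /and3P [_ _ /fintype.subsetP h1].
  move=> /and3P [_ _ /fintype.subsetP h2] e.
  have [w1 w2] : w \in s1 /\ w \in s2 by split; [apply: h1|apply: h2]; rewrite !inE eqxx.
  by rewrite -(finset.setD1K w1) e finset.setD1K.
rewrite (_ : [set _ in _ | _] = (fun s => s :\ w) @: A) ?card_in_imset // => [odd_v|].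
  have : [set w; v] \in bd 2 c by rewrite inE cards2 (eq_sym w v) vw; exact: odd_v.
  by move/bdw; rewrite !inE eqxx.
apply/setP => e; rewrite inE; apply/idP/imsetP.
  case/andP => /imsetP [s]; rewrite inE => /andP [sc ws] -> /andP [_].
  rewrite finset.sub1set !inE => /andP [_ vs]; exists s => //.
  rewrite !inE sc c3 //=; apply/fintype.subsetP => x.
  by rewrite !inE => /orP [] /eqP ->.
case=> s; rewrite !inE => /and3P [sc /eqP s3 /fintype.subsetP sub] ->.
have ws : w \in s by apply: sub; rewrite !inE eqxx.
have vs : v \in s by apply: sub; rewrite !inE eqxx orbT.
rewrite cardsD1_triangle // eqxx finset.sub1set !inE vw vs !andbT.
by apply: imset_f; rewrite inE sc.
Qed.

Section TwoDimensional.
Variable K : {set {set V}}.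
Hypothesis K_face : forall s t : {set V}, s \in K -> t \subset s -> t != finset.set0 -> t \in K.
Hypothesis K_dim : forall s : {set V}, s \in K -> #|s| <= 3.

Lemma chain_link_zchain c (w : V) :
  zchain K 2 c -> zchain (vlink K w) 1 (chain_link c w).
Proof.
move=> /andP [/fintype.subsetP cK /forall_inP c3].
apply/andP; split; last first.
  apply/forall_inP => e /imsetP [s]; rewrite inE => /andP [sc ws] ->.
  by rewrite cardsD1_triangle // (eqP (c3 s sc)).
apply/fintype.subsetP => e /imsetP [s]; rewrite inE => /andP [sc ws] ->.
rewrite !inE eqxx /= finset.setD1K // (cK s sc) ?andbT /=.
apply: K_face (cK s sc) (subD1set s w) _.
by rewrite -cards_eq0 cardsD1_triangle // (eqP (c3 s sc)).
Qed.

Lemma vlink_zchain2_eq0 (w : V) d : zchain (vlink K w) 2 d -> d = finset.set0.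
Proof.
case/andP => /fintype.subsetP dL /forall_inP d3.
apply/setP => s; rewrite inE; apply/negP => sd.
have := dL s sd; rewrite !inE => /and3P [_ ws wK].
by have := K_dim wK; rewrite cardsU1 ws (eqP (d3 s sd)).
Qed.

Lemma rel_cycle2_delete_vertex F c (w : V) :
  {in F, forall e : {set V}, w \notin e} -> H_trivial (vlink K w) 1 ->
  rel_cycle2 K F c -> rel_cycle2 (delete_vertex K w) F c.
Proof.
move=> Fw hL /andP [cK bdF]; case/andP: (bdF) => /fintype.subsetP bdF' _.
have link0 : chain_link c w = finset.set0.
  have c3 s : s \in c -> #|s| = 3 by case/andP: cK => _ /forall_inP c3 /c3 /eqP.
  have link_cycle : zcycle (vlink K w) 1 (chain_link c w).
    rewrite /zcycle chain_link_zchain // (bd_chain_link c3) ?eqxx // => e /bdF'.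
    exact: Fw.
  by have [d [/vlink_zchain2_eq0 -> <-]] := hL _ link_cycle; rewrite bd_set0.
rewrite /rel_cycle2 bdF andbT; case/andP: cK => /fintype.subsetP cK c3.
apply/andP; split => //; apply/fintype.subsetP => s sc; rewrite inE cK //=.
apply/negP => ws; have : s :\ w \in chain_link c w by apply: imset_f; rewrite inE sc.
by rewrite link0 inE.
Qed.

Lemma H2_trivial_no_tetrahedron (Q : {set V}) : H_trivial K 2 -> #|Q| = 4 ->
  ~ {subset [set s in powerset Q | #|s| == 3] <= K}.
Proof.
move=> H Q4 QK; pose Z := [set s in powerset Q | #|s| == 3].
have hZ : zcycle K 2 Z.
  rewrite /zcycle bd2_tetrahedron // eqxx andbT; apply/andP; split.
    by apply/fintype.subsetP.
  by apply/forall_inP => s; rewrite !inE => /andP [].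
have [d [/andP [/fintype.subsetP dK /forall_inP d3] dZ]] := H Z hZ.
have d0 : d = finset.set0.
  apply/setP => s; rewrite inE; apply/negP => sd.
  by have := K_dim (dK s sd); rewrite (eqP (d3 s sd)).
have /card_gt0P [x xQ] : 0 < #|Q| by rewrite Q4.
have : Q :\ x \in Z.
  by rewrite !inE subD1set /=; move: Q4; rewrite (cardsD1 x Q) xQ add1n => -[->].
by rewrite -dZ d0 bd_set0 inE.
Qed.

End TwoDimensional.
End Chains.

Section Plane.
Local Open Scope ring_scope.
Variable R : realType.

Definition sqdist (p q : pt R) : R := (p.1 - q.1) ^+ 2 + (p.2 - q.2) ^+ 2.

Lemma sqdistC (p q : pt R) : sqdist p q = sqdist q p.
Proof. by rewrite /sqdist -(sqrrN (p.1 - q.1)) -(sqrrN (p.2 - q.2)) !opprB. Qed.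

Lemma eucl_distC (p q : pt R) : eucl_dist p q = eucl_dist q p.
Proof. by rewrite /eucl_dist -/(sqdist p q) -/(sqdist q p) sqdistC. Qed.

Lemma eucl_dist_ltE (r : R) (p q : pt R) : 0 < r ->
  (eucl_dist p q < r) = (sqdist p q < r ^+ 2).
Proof.
move=> r0; rewrite /eucl_dist -/(sqdist p q) -{1}(ger0_norm (ltW r0)) -sqrtr_sqr.
by rewrite ltr_sqrt // exprn_gt0.
Qed.

Lemma eucl_distxx (p : pt R) : eucl_dist p p = 0.
Proof. by rewrite /eucl_dist !subrr expr0n /= addr0 sqrtr0. Qed.

Lemma sqdist_lincomb_lt (a b v : pt R) (l r : R) : 0 <= l <= 1 ->
  sqdist a v < r -> sqdist b v < r -> sqdist (lincomb a b l) v < r.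
Proof.
case/andP => l0 l1 ha hb.
have conv : sqdist (lincomb a b l) v <= (1 - l) * sqdist a v + l * sqdist b v.
  rewrite /sqdist /lincomb /= -subr_ge0.
  have -> : (1 - l) * ((a.1 - v.1) ^+ 2 + (a.2 - v.2) ^+ 2) +
     l * ((b.1 - v.1) ^+ 2 + (b.2 - v.2) ^+ 2) -
    (((1 - l) * a.1 + l * b.1 - v.1) ^+ 2 + ((1 - l) * a.2 + l * b.2 - v.2) ^+ 2)
    = l * (1 - l) * ((a.1 - b.1) ^+ 2 + (a.2 - b.2) ^+ 2) by ring.
  by rewrite !mulr_ge0 ?subr_ge0 ?addr_ge0 ?sqr_ge0.
apply: (le_lt_trans conv).
have h1 : 0 <= (1 - l) * (r - sqdist a v) by apply: mulr_ge0; lra.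
have [l_le0|l_gt0] := leP l 0.
  have l_eq0 : l = 0 by lra.
  by rewrite l_eq0 subr0 mul1r mul0r addr0.
have h2 : 0 < l * (r - sqdist b v) by apply: mulr_gt0; lra.
lra.
Qed.

Lemma divr_itv01 (x y : R) : 0 <= x -> 0 < y -> x <= y -> 0 <= x / y <= 1.
Proof.
move=> x0 y0 xy; apply/andP; split; first exact: divr_ge0 x0 (ltW y0).
by rewrite ler_pdivrMr // mul1r.
Qed.

Lemma lincomb_same_side (x y l : R) : 0 < x * y -> 0 <= l <= 1 ->
  (1 - l) * x + l * y != 0.
Proof.
move=> xy /andP [l0 l1]; wlog x0 : x y xy / 0 < x.
  move=> H; have [x0|x0|x0] := ltgtP 0 x; first exact: H.
    by rewrite -oppr_eq0 opprD -!mulrN; apply: H; rewrite ?mulrNN ?oppr_gt0.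
  by move: xy; rewrite -x0 mul0r ltxx.
have y0 : 0 < y by rewrite -(pmulr_rgt0 _ x0).
rewrite gt_eqF //; have [->|l_neq0] := eqVneq l 0; first by rewrite subr0 mul1r mul0r addr0.
apply: ltr_wpDl; first by apply: mulr_ge0; [rewrite subr_ge0|apply: ltW].
by apply: mulr_gt0 => //; rewrite lt_def l_neq0.
Qed.

Lemma mulr_lt0_sign (x y : R) : x != 0 -> y != 0 ->
  (x * y < 0) = ((0 < x) != (0 < y)).
Proof.
move=> x0 y0; have neg (z : R) : z != 0 -> (z < 0) = ~~ (0 < z).
  by move=> z0; rewrite ltNge le_eqVlt eq_sym (negbTE z0).
by rewrite mulr_lt0 x0 y0 !neg //; case: (0 < x); case: (0 < y).
Qed.

End Plane.

Section Rips.
Local Open Scope ring_scope.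
Variables (R : realType) (V : finType) (pos : V -> pt R) (rb : R).
Hypothesis rb_gt0 : 0 < rb.
Local Notation K := (rips2 pos rb).

Lemma rips2P (s : {set V}) : reflect
  [/\ s != finset.set0, (#|s| <= 3)%N &
      forall x y, x \in s -> y \in s -> eucl_dist (pos x) (pos y) < rb]
  (s \in K).
Proof.
rewrite inE; apply: (iffP idP).
  case/andP => /andP [s0 s3] /forall_inP h; split => // x y xs ys.
  by have /forall_inP := h x xs; apply.
case=> s0 s3 h; rewrite s0 s3 /=.
by apply/forall_inP => x xs; apply/forall_inP => y ys; apply: h.
Qed.

Lemma rips2_face (s t : {set V}) : s \in K -> t \subset s -> t != finset.set0 -> t \in K.
Proof.
case/rips2P => _ s3 h ts t0; apply/rips2P; split => //.
  exact: leq_trans (subset_leq_card ts) s3.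
by move=> x y xt yt; apply: h; apply: (fintype.subsetP ts).
Qed.

Lemma rips2_card (s : {set V}) : s \in K -> (#|s| <= 3)%N.
Proof. by case/rips2P. Qed.

Lemma rips2_no_4clique (w : V) (T : {set V}) : H_trivial K 2 ->
  T \in K -> #|T| = 3 -> w \notin T ->
  ~ (forall v, v \in T -> eucl_dist (pos w) (pos v) < rb).
Proof.
move=> H TK T3 wT hw; apply: (H2_trivial_no_tetrahedron rips2_card H (Q := w |: T)).
  by rewrite cardsU1 wT T3.
have hQ x y : x \in w |: T -> y \in w |: T -> eucl_dist (pos x) (pos y) < rb.
  rewrite !inE => /orP [/eqP ->|xT] /orP [/eqP ->|yT].
  - by rewrite eucl_distxx.
  - exact: hw.
  - by rewrite eucl_distC; apply: hw.
  - by case/rips2P: TK => _ _; apply.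
move=> s sQ3; have /andP [sQ /eqP s3] : (s \subset w |: T) && (#|s| == 3).
  by move: sQ3; rewrite !inE.
apply/rips2P; split.
- by rewrite -cards_eq0 s3.
- by rewrite s3.
- by move=> x y xs ys; apply: hQ; apply: (fintype.subsetP sQ).
Qed.

End Rips.

Section RayCrossing.
Local Open Scope ring_scope.
Variables (R : realType) (p : pt R) (t : R).

(* The ray from p of slope t is the set of points q with [ray_height q = 0]
   and [0 < ray_coord q]. When a and b lie strictly on opposite sides of its
   line, the segment [a, b] meets the line at the point of coordinate
   [ray_det a b / (ray_height b - ray_height a)], so [ray_crosses a b] says
   that the segment crosses the ray. *)
Definition ray_coord (a : pt R) : R := a.1 - p.1.
Definition ray_height (a : pt R) : R := (a.2 - p.2) - t * (a.1 - p.1).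
Definition ray_det (a b : pt R) : R :=
  ray_coord a * ray_height b - ray_height a * ray_coord b.
Definition ray_crosses (a b : pt R) : bool :=
  ((0 < ray_height a) != (0 < ray_height b)) &&
  (0 < ray_det a b * (ray_height b - ray_height a)).

Lemma ray_crossesC (a b : pt R) : ray_crosses a b = ray_crosses b a.
Proof. by rewrite /ray_crosses eq_sym; congr (_ && (0 < _)); rewrite /ray_det; ring. Qed.

Lemma ray_crossesxx (a : pt R) : ray_crosses a a = false.
Proof. by rewrite /ray_crosses eqxx. Qed.

Lemma ray_coord_lincomb (a b : pt R) (l : R) :
  ray_coord (lincomb a b l) = (1 - l) * ray_coord a + l * ray_coord b.
Proof. by rewrite /ray_coord /lincomb /=; ring. Qed.

Lemma ray_height_lincomb (a b : pt R) (l : R) :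
  ray_height (lincomb a b l) = (1 - l) * ray_height a + l * ray_height b.
Proof. by rewrite /ray_height /lincomb /=; ring. Qed.

Lemma ray_height_neq0 (a b : pt R) : ray_height a * ray_height b < 0 ->
  ray_height b - ray_height a != 0.
Proof.
move=> hab; apply/negP => /eqP e; have ea : ray_height a = ray_height b by lra.
by move: hab; rewrite ea ltNge -expr2 sqr_ge0.
Qed.

Lemma segment_meets_line (a b : pt R) : ray_height a * ray_height b < 0 ->
  exists l, 0 <= l <= 1 /\ ray_height (lincomb a b l) = 0.
Proof.
move=> hab; have D0 := ray_height_neq0 hab.
exists (ray_height a / (ray_height a - ray_height b)); split; last first.
  by rewrite ray_height_lincomb; field; apply: contra D0 => /eqP e; apply/eqP; lra.
have [ha|ha|ha] := ltgtP 0 (ray_height a); last by rewrite -ha mul0r ltxx in hab.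
- have hb : ray_height b < 0 by rewrite -(pmulr_rlt0 _ ha).
  have Dp : 0 < ray_height a - ray_height b by lra.
  by apply: divr_itv01 => //; lra.
- have hb : 0 < ray_height b by rewrite -(nmulr_rlt0 _ ha).
  rewrite -mulrNN -invrN.
  have Dp : 0 < - (ray_height a - ray_height b) by lra.
  by apply: divr_itv01 => //; lra.
Qed.

Lemma ray_crossesE (a b : pt R) l : ray_height a * ray_height b < 0 ->
  ray_height (lincomb a b l) = 0 -> ray_crosses a b = (0 < ray_coord (lincomb a b l)).
Proof.
move=> hab h0; have D0 := ray_height_neq0 hab.
have eO : ray_det a b = ray_coord (lincomb a b l) * (ray_height b - ray_height a).
  have id : ray_coord (lincomb a b l) * (ray_height b - ray_height a) - ray_det a b =
      (ray_coord b - ray_coord a) * ray_height (lincomb a b l).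
    by rewrite ray_coord_lincomb ray_height_lincomb /ray_det; ring.
  by apply/eqP; rewrite eq_sym -subr_eq0 id h0 mulr0.
rewrite /ray_crosses -mulr_lt0_sign; last 2 first.
- by apply: contraTneq hab => ->; rewrite mul0r ltxx.
- by apply: contraTneq hab => ->; rewrite mulr0 ltxx.
by rewrite hab eO -mulrA -expr2 pmulr_lgt0 // exprn_even_gt0.
Qed.

Lemma ray_crosses_intro (a b : pt R) l : ray_height a != 0 -> ray_height b != 0 ->
  0 <= l <= 1 -> ray_height (lincomb a b l) = 0 -> 0 < ray_coord (lincomb a b l) ->
  ray_crosses a b.
Proof.
move=> a0 b0 l01 h0 u0; rewrite (ray_crossesE _ h0) //.
rewrite lt_neqAle mulf_neq0 //= leNgt; apply/negP => same_side.
by move: (lincomb_same_side same_side l01); rewrite -ray_height_lincomb h0 eqxx.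
Qed.

Lemma ray_line_between (q1 q2 : pt R) : ray_height q1 = 0 -> ray_height q2 = 0 ->
  ray_coord q2 <= 0 < ray_coord q1 -> exists l, 0 <= l <= 1 /\ p = lincomb q2 q1 l.
Proof.
move=> h1 h2 /andP [u2 u1]; have D : 0 < ray_coord q1 - ray_coord q2 by lra.
exists (- ray_coord q2 / (ray_coord q1 - ray_coord q2)); split.
  by apply: divr_itv01 => //; lra.
move: h1 h2 D; rewrite /ray_height /ray_coord /lincomb => h1 h2 D /=.
have e1 : q1.2 = p.2 + t * (q1.1 - p.1) by lra.
have e2 : q2.2 = p.2 + t * (q2.1 - p.1) by lra.
rewrite [p]surjective_pairing /= e1 e2; congr (_, _); field; lra.
Qed.

Section ConvexPredicate.
Variable N : pt R -> Prop.
Hypothesis N_lincomb : forall q1 q2 l, 0 <= l <= 1 -> N q1 -> N q2 -> N (lincomb q1 q2 l).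

(* The segments [A, X] and [B, X] meet the line of the ray on opposite sides
   of p, so p lies between the two crossing points. *)
Lemma convex_crossing_between (A B X : pt R) : N A -> N B -> N X ->
  ray_height A * ray_height X < 0 -> ray_height B * ray_height X < 0 ->
  ray_crosses A X != ray_crosses B X -> N p.
Proof.
move=> NA NB NX hA hB.
have [la [la1 ha0]] := segment_meets_line hA.
have [lb [lb1 hb0]] := segment_meets_line hB.
rewrite (ray_crossesE hA ha0) (ray_crossesE hB hb0).
have Na := N_lincomb la1 NA NX; have Nb := N_lincomb lb1 NB NX.
case: (ltP 0 (ray_coord (lincomb A X la))) => ua;
  case: (ltP 0 (ray_coord (lincomb B X lb))) => ub //= _.
  have [l [l1 ->]] := ray_line_between ha0 hb0 (introT andP (conj ub ua)).
  exact: N_lincomb.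
have [l [l1 ->]] := ray_line_between hb0 ha0 (introT andP (conj ua ub)).
exact: N_lincomb.
Qed.

Lemma convex_odd_crossings (A B X : pt R) : N A -> N B -> N X ->
  ray_height A != 0 -> ray_height B != 0 -> ray_height X != 0 ->
  odd (ray_crosses A B + ray_crosses A X + ray_crosses B X) -> N p.
Proof.
move=> NA NB NX a0 b0 x0.
have same_side a b : (0 < ray_height a) = (0 < ray_height b) -> ray_crosses a b = false.
  by move=> e; rewrite /ray_crosses e eqxx.
have even_sum (x y : bool) : odd (x + y) -> x != y by case: x; case: y.
have [eAB|nAB] := eqVneq (0 < ray_height A) (0 < ray_height B).
  rewrite (same_side _ _ eAB) add0n => /even_sum.
  have [eXA|nXA] := eqVneq (0 < ray_height X) (0 < ray_height A).
    by rewrite !same_side // -?eAB eXA.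
  apply: convex_crossing_between => //; rewrite mulr_lt0_sign //.
    by rewrite eq_sym.
  by rewrite -eAB eq_sym.
have [eXA|nXA] := eqVneq (0 < ray_height X) (0 < ray_height A).
  rewrite (same_side A X) ?eXA // addn0 (ray_crossesC B X) => /even_sum ABX.
  by apply: (@convex_crossing_between A X B); rewrite ?mulr_lt0_sign ?eXA.
have eXB : (0 < ray_height X) = (0 < ray_height B).
  by move: nAB nXA; case: (0 < ray_height X); case: (0 < ray_height A);
    case: (0 < ray_height B).
rewrite (same_side B X) ?eXB // addn0 (ray_crossesC A B) (ray_crossesC A X).
move=> /even_sum BAX; apply: (@convex_crossing_between B X A) => //;
  rewrite mulr_lt0_sign // ?eXB //; by rewrite eq_sym.
Qed.

End ConvexPredicate.
End RayCrossing.

Section ConvexCompact.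
Local Open Scope classical_set_scope.
Local Open Scope ring_scope.
Variable R : realType.

Lemma closure_compact (A : set (pt R)) : compact A -> closure A = A.
Proof. by move=> /(compact_closed (@norm_hausdorff _ (R * R)%type)) /closure_id <-. Qed.

Lemma compact_fst_bounded (A : set (pt R)) : compact A ->
  exists2 M, 0 < M & forall x, A x -> `|x.1| < M.
Proof.
move=> /compact_bounded /ex_strict_bound_gt0 [M M0 hM]; exists M => // x Ax.
by apply: le_lt_trans (hM x Ax); rewrite prod_normE le_max lexx.
Qed.

Lemma interior_boxP (A : set (pt R)) x : interior A x <->
  exists2 e, 0 < e & forall y, `|x.1 - y.1| < e -> `|x.2 - y.2| < e -> A y.
Proof.
rewrite /interior nbhs_ballP; split => -[e e0 h]; exists e => // y.
  by move=> h1 h2; apply: h; split.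
by case=> h1 h2; apply: h.
Qed.

Lemma convex_interior_lincomb (A : set (pt R)) a b l : convex_pl A ->
  interior A a -> A b -> 0 <= l < 1 -> interior A (lincomb a b l).
Proof.
move=> cA /interior_boxP [e e0 he] Ab /andP [l0 l1].
have l1' : 0 < 1 - l by lra.
apply/interior_boxP; exists ((1 - l) * e); first exact: mulr_gt0.
(* a point y close to lincomb a b l is lincomb a' b l for some a' close to a *)
move=> y h1 h2.
pose a' := ((y.1 - l * b.1) / (1 - l), (y.2 - l * b.2) / (1 - l)).
have -> : y = lincomb a' b l.
  by rewrite /lincomb /a' /= [y]surjective_pairing; congr (_, _); field; lra.
apply: cA => //; last by rewrite l0 ltW.
apply: he; rewrite /a' /=.
- have -> : a.1 - (y.1 - l * b.1) / (1 - l) = ((lincomb a b l).1 - y.1) / (1 - l).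
    by rewrite /lincomb /=; field; lra.
  by rewrite normrM normfV (gtr0_norm l1') ltr_pdivrMr // mulrC.
- have -> : a.2 - (y.2 - l * b.2) / (1 - l) = ((lincomb a b l).2 - y.2) / (1 - l).
    by rewrite /lincomb /=; field; lra.
  by rewrite normrM normfV (gtr0_norm l1') ltr_pdivrMr // mulrC.
Qed.

Definition ray_pt (p : pt R) (t s : R) : pt R := (p.1 + s, p.2 + t * s).

Lemma ray_height_pt p t s : ray_height p t (ray_pt p t s) = 0.
Proof. by rewrite /ray_height /ray_pt /=; ring. Qed.

Lemma ray_coord_pt p t s : ray_coord p (ray_pt p t s) = s.
Proof. by rewrite /ray_coord /ray_pt /=; ring. Qed.

Lemma ray_ptE p t q : ray_height p t q = 0 -> q = ray_pt p t (ray_coord p q).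
Proof.
by rewrite /ray_height /ray_pt /ray_coord => h; rewrite [LHS]surjective_pairing; congr (_, _); lra.
Qed.

Lemma ray_pt0 p t : ray_pt p t 0 = p.
Proof. by rewrite /ray_pt addr0 mulr0 addr0 -surjective_pairing. Qed.

Definition polygon_boundary (Delta : set (pt R)) n (P : 'I_n -> pt R) : Prop :=
  bdry_set Delta = \bigcup_(i in [set: 'I_n]) pseg (P i) (P (ordS i)).

Definition simple_polygon n (P : 'I_n -> pt R) : Prop :=
  forall i j : 'I_n, i != j ->
    pseg (P i) (P (ordS i)) `&` pseg (P j) (P (ordS j))
    = if j == ordS i then [set P j] else if i == ordS j then [set P i] else set0.

Section Polygon.
Variables (Delta : set (pt R)) (n : nat) (P : 'I_n -> pt R) (p : pt R) (t : R).
Local Notation edge i := (pseg (P i) (P (ordS i))).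
Local Notation crosses i := (ray_crosses p t (P i) (P (ordS i))).
Hypotheses (Delta_convex : convex_pl Delta) (Delta_compact : compact Delta).
Hypotheses (Delta_bdry : polygon_boundary Delta P) (edgesI : simple_polygon P).
Hypotheses (Delta_p : Delta p) (p_off_bdry : forall i, ~ edge i p).
Hypothesis P_off_line : forall i, ray_height p t (P i) != 0.

Lemma edge_bdry i q : edge i q -> bdry_set Delta q.
Proof. by move=> hq; rewrite Delta_bdry; exists i. Qed.

Lemma edge_sub_Delta i q : edge i q -> Delta q.
Proof. by move=> /edge_bdry []; rewrite closure_compact. Qed.

Lemma interior_Delta_p : interior Delta p.
Proof.
apply: contrapT => np; have : bdry_set Delta p by split; rewrite ?closure_compact.
by rewrite Delta_bdry => -[i _ /p_off_bdry].
Qed.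

Lemma crossesP i : crosses i <->
  exists q, [/\ edge i q, ray_height p t q = 0 & 0 < ray_coord p q].
Proof.
split => [ci|[q [[l [l01 ->]] hq uq]]]; last first.
  exact: ray_crosses_intro (P_off_line i) (P_off_line (ordS i)) l01 hq uq.
have hab : ray_height p t (P i) * ray_height p t (P (ordS i)) < 0.
  by rewrite mulr_lt0_sign //; case/andP: ci.
have [l [l01 hl]] := segment_meets_line hab.
by exists (lincomb (P i) (P (ordS i)) l); split => //; [exists l|rewrite -(ray_crossesE hab hl)].
Qed.

(* If the ray met the boundary at two points, the nearer one would lie strictly
   between the interior point p and a point of Delta, hence in the interior. *)
Lemma ray_meets_bdry_once ia ib qa qb : edge ia qa -> edge ib qb ->
  ray_height p t qa = 0 -> ray_height p t qb = 0 ->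
  0 < ray_coord p qa -> ~ ray_coord p qa < ray_coord p qb.
Proof.
move=> sa sb ha hb ua uab; have ub : 0 < ray_coord p qb by apply: lt_trans uab.
have e : qa = lincomb p qb (ray_coord p qa / ray_coord p qb).
  move: (ray_ptE ha) (ray_ptE hb) ua ub.
  move: (ray_coord p qa) (ray_coord p qb) => xa xb -> -> xa0 xb0.
  by rewrite /ray_pt /lincomb /=; congr (_, _); field; rewrite gt_eqF.
have [_] := edge_bdry sa; apply; rewrite e.
apply: convex_interior_lincomb Delta_convex interior_Delta_p (edge_sub_Delta sb) _.
apply/andP; split; first exact: divr_ge0 (ltW ua) (ltW ub).
by rewrite ltr_pdivrMr // mul1r.
Qed.

Lemma crosses_unique i j : crosses i -> crosses j -> i = j.
Proof.
move=> /crossesP [qi [si hi ui]] /crossesP [qj [sj hj uj]].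
apply/eqP; apply: contraT => nij.
case: (ltgtP (ray_coord p qi) (ray_coord p qj)) => c.
- by case: (ray_meets_bdry_once si sj hi hj ui c).
- by case: (ray_meets_bdry_once sj si hj hi uj c).
have eq : qi = qj by rewrite (ray_ptE hi) (ray_ptE hj) c.
have : (edge i `&` edge j) qi by split; rewrite // eq.
rewrite edgesI //; case: (j == ordS i); last case: (i == ordS j); move=> //= eP.
- by move: (P_off_line j); rewrite -eP hi eqxx.
- by move: (P_off_line i); rewrite -eP hi eqxx.
Qed.

(* The ray leaves Delta at [sup exit_times], a boundary point on the ray. *)
Let exit_times := [set s : R | 0 <= s /\ Delta (ray_pt p t s)].

Lemma has_sup_exit_times : has_sup exit_times.
Proof.
have [M M0 hM] := compact_fst_bounded Delta_compact.
split; first by exists 0; split; rewrite ?ray_pt0.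
exists (M + `|p.1|) => s [s0 Ds]; have := hM _ Ds; rewrite /ray_pt /= => h.
have h1 := ler_norm (p.1 + s); have h2 : - p.1 <= `|p.1| by rewrite -normrN ler_norm.
lra.
Qed.

Lemma exit_in_Delta : Delta (ray_pt p t (sup exit_times)).
Proof.
rewrite -(closure_compact Delta_compact) => B /nbhs_ballP [e e0 hBe].
have t1 : 0 < 1 + `|t| by rewrite ltr_pwDl.
have d0 : 0 < e / (1 + `|t|) by rewrite divr_gt0.
have [s Ss hs] := sup_adherent d0 has_sup_exit_times.
have sle : s <= sup exit_times by apply: sup_upper_bound => //; exact: has_sup_exit_times.
exists (ray_pt p t s); split; first by case: Ss.
have hd' : (sup exit_times - s) * (1 + `|t|) < e by rewrite -ltr_pdivlMr //; lra.
have ds : 0 <= sup exit_times - s by lra.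
have t0 := normr_ge0 t; apply: hBe.
rewrite /ball /= /prod_ball -!ball_normE /ball_ /= /ray_pt /=.
have -> : (p.1 + sup exit_times) - (p.1 + s) = sup exit_times - s by ring.
have -> : (p.2 + t * sup exit_times) - (p.2 + t * s) = t * (sup exit_times - s) by ring.
by rewrite normrM !(ger0_norm ds); split; nra.
Qed.

Lemma exit_not_interior : ~ interior Delta (ray_pt p t (sup exit_times)).
Proof.
case/interior_boxP => e e0 he.
have t1 : 0 < 1 + `|t| by rewrite ltr_pwDl.
pose d := e / (2 * (1 + `|t|)).
have d0 : 0 < d by rewrite divr_gt0 // mulr_gt0.
have hd : d * (2 * (1 + `|t|)) = e by rewrite /d mulfVK // gt_eqF // mulr_gt0.
have sup0 : 0 <= sup exit_times.
  by apply: sup_upper_bound; [exact: has_sup_exit_times|split; rewrite ?ray_pt0].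
suff /(sup_upper_bound has_sup_exit_times) : exit_times (sup exit_times + d) by lra.
split; first by lra.
have t0 := normr_ge0 t; apply: he; rewrite /ray_pt /=.
- have -> : (p.1 + sup exit_times) - (p.1 + (sup exit_times + d)) = - d by ring.
  by rewrite normrN gtr0_norm //; nra.
- have -> : (p.2 + t * sup exit_times) - (p.2 + t * (sup exit_times + d)) = - (t * d).
    by ring.
  by rewrite normrN normrM (gtr0_norm d0); nra.
Qed.

Lemma ray_leaves_Delta : exists i, crosses i.
Proof.
have : bdry_set Delta (ray_pt p t (sup exit_times)).
  by split; [rewrite closure_compact //; exact: exit_in_Delta|exact: exit_not_interior].
rewrite Delta_bdry => -[i _ si]; exists i; apply/crossesP.
exists (ray_pt p t (sup exit_times)); rewrite ray_height_pt ray_coord_pt; split => //.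
rewrite lt_neqAle; apply/andP; split.
  by apply/negP => /eqP e; move: si; rewrite -e ray_pt0 => /p_off_bdry.
by apply: sup_upper_bound; [exact: has_sup_exit_times|split; rewrite ?ray_pt0].
Qed.

Lemma ray_crosses_polygon_once : exists i0, forall i, crosses i = (i == i0).
Proof.
have [i0 c0] := ray_leaves_Delta; exists i0 => i.
by apply/idP/eqP => [/crosses_unique/(_ c0)|->].
Qed.

End Polygon.
End ConvexCompact.

Section Nodes.
Local Open Scope ring_scope.
Variables (R : realType) (V : finType) (pos : V -> pt R).

Definition ray_crosses_edge (p : pt R) (t : R) (e : {set V}) : bool :=
  [exists y in e, exists z in e, ray_crosses p t (pos y) (pos z)].

Lemma ray_crosses_edge2 p t (y z : V) :
  ray_crosses_edge p t [set y; z] = ray_crosses p t (pos y) (pos z).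
Proof.
apply/idP/idP => [|h].
  case/exists_inP => y'; rewrite !inE => /orP [] /eqP -> /exists_inP [z'];
    by rewrite !inE => /orP [] /eqP ->; rewrite ?ray_crossesxx // ray_crossesC.
apply/exists_inP; exists y; first by rewrite !inE eqxx.
by apply/exists_inP; exists z; first by rewrite !inE eqxx orbT.
Qed.

(* A slope larger than every slope from p to a node: the line through p of
   that slope contains no node other than p. *)
Lemma generic_slope (p : pt R) : exists t, forall v, pos v != p -> ray_height p t (pos v) != 0.
Proof.
pose slope v := ((pos v).2 - p.2) / ((pos v).1 - p.1).
have sg : 0 <= \sum_(u : V) `|slope u| by rewrite sumr_ge0.
exists (1 + \sum_(u : V) `|slope u|) => v pv; rewrite /ray_height.
have hb : slope v <= \sum_(u : V) `|slope u|.
  by rewrite (bigD1 v) //= (le_trans (ler_norm _)) // lerDl sumr_ge0.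
apply/negP => /eqP h; have [d|d] := eqVneq ((pos v).1 - p.1) 0.
  move: h pv; rewrite d mulr0 subr0 => /eqP; rewrite !subr_eq0 => /eqP e2.
  move/eqP: d; rewrite subr_eq0 => /eqP e1.
  by rewrite [pos v]surjective_pairing [p]surjective_pairing e1 e2 eqxx.
have e : (pos v).2 - p.2 = (1 + \sum_(u : V) `|slope u|) * ((pos v).1 - p.1) by lra.
have : slope v = 1 + \sum_(u : V) `|slope u| by rewrite /slope e mulfK.
lra.
Qed.

Lemma odd_crossings_fence (Delta : set (pt R)) n (f : 'I_n -> V) (q : pt R) (t : R) :
  convex_pl Delta -> compact Delta -> (2 < n)%N -> injective f ->
  polygon_boundary Delta (fun i => pos (f i)) -> simple_polygon (fun i => pos (f i)) ->
  Delta q -> (forall i, ~ pseg (pos (f i)) (pos (f (ordS i))) q) ->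
  (forall i, ray_height q t (pos (f i)) != 0) ->
  odd (\sum_(e in [set [set f i; f (ordS i)] | i : 'I_n]%SET) ray_crosses_edge q t e).
Proof.
move=> cvD cD n3 finj hB hI Dq off hnz.
have [i0 hi0] := ray_crosses_polygon_once cvD cD hB hI Dq off hnz.
rewrite big_imset /=; last exact: in2W (cycle_edges_inj n3 finj).
rewrite (eq_bigr (fun i => nat_of_bool (i == i0))); last first.
  by move=> i _; rewrite ray_crosses_edge2 hi0.
by rewrite (bigD1 i0) //= eqxx big1 ?addn0 // => i /negbTE ->.
Qed.

Variable rb : R.
Hypothesis rb_gt0 : 0 < rb.
Local Notation K := (rips2 pos rb).

Definition near (T : {set V}) (q : pt R) : Prop :=
  forall v, v \in T -> sqdist q (pos v) < rb ^+ 2.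

Lemma near_lincomb T q1 q2 l : 0 <= l <= 1 -> near T q1 -> near T q2 ->
  near T (lincomb q1 q2 l).
Proof. by move=> l01 h1 h2 v vT; apply: sqdist_lincomb_lt; [|apply: h1|apply: h2]. Qed.

Lemma near_vertex T y : T \in K -> y \in T -> near T (pos y).
Proof.
by case/rips2P => _ _ hd yT v vT; rewrite -eucl_dist_ltE //; apply: hd.
Qed.

Lemma not_near_node (w : V) T : H_trivial K 2 -> T \in K -> #|T| = 3 -> w \notin T ->
  ~ near T (pos w).
Proof.
move=> H TK T3 wT hT; apply: (rips2_no_4clique rb_gt0 H TK T3 wT) => v vT.
by rewrite eucl_dist_ltE //; apply: hT.
Qed.

Section Chain.
Variable c : {set {set V}}.
Hypotheses (c_sub : {subset c <= K}) (c_card : forall s, s \in c -> #|s| = 3).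

Lemma near_bd_edge (y z : V) q : [set y; z] \in bd 2 c ->
  pseg (pos y) (pos z) q -> exists2 T, T \in c & near T q.
Proof.
rewrite inE => /andP [_ /odd_gt0 /card_gt0P [T]].
rewrite !inE => /and3P [Tc _ /fintype.subsetP sT] [l [l01 ->]].
exists T => //; apply: near_lincomb => //; apply: near_vertex (c_sub Tc) _;
  by apply: sT; rewrite !inE eqxx ?orbT.
Qed.

Lemma near_odd_crossings q t :
  (forall s v, s \in c -> v \in s -> ray_height q t (pos v) != 0) ->
  odd (\sum_(e in bd 2 c) ray_crosses_edge q t e) -> exists2 T, T \in c & near T q.
Proof.
move=> hnz; rewrite odd_sum_bd2 => /odd_sum_exists [T /andP [Tc _]].
have [a [b [x [ab ax bx eT]]]] := card3P (c_card Tc).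
rewrite eT sum_edges_triangle // !ray_crosses_edge2 => odd_T.
have inT : [/\ a \in T, b \in T & x \in T] by rewrite eT !inE !eqxx !orbT.
case: inT => aT bT xT; exists T => //.
apply: (convex_odd_crossings (@near_lincomb T)) odd_T;
  by [apply: near_vertex (c_sub Tc) _|apply: hnz Tc _].
Qed.

End Chain.

Lemma delete_interior_node_not_dSG (Delta : set (pt R)) n (f : 'I_n -> V) (w : V) :
  convex_pl Delta -> compact Delta -> (2 < n)%N -> injective f ->
  polygon_boundary Delta (fun i => pos (f i)) -> simple_polygon (fun i => pos (f i)) ->
  injective pos -> (forall v, Delta (pos v)) ->
  w \notin [set f i | i : 'I_n]%SET -> H_trivial K 2 ->
  ~ dSG_criterion (delete_vertex K w) (fence f).
Proof.
move=> cvD cD n3 finj hB hI posinj Dpos hwf H2 [c [hc nb]].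
have bdE := bd2_fundamental_fence finj hc nb.
case/andP: hc => /andP [/fintype.subsetP cKw /forall_inP c3] _.
have cK s : s \in c -> s \in K /\ w \notin s by move/cKw; rewrite inE => /andP [].
have c_card s : s \in c -> #|s| = 3 by move/c3/eqP.
have c_sub : {subset c <= K} by move=> s /cK [].
suff [T Tc] : exists2 T, T \in c & near T (pos w).
  by case: (cK T Tc) => TK wT; apply: not_near_node H2 TK (c_card T Tc) wT.
have [[i wi]|off] := pselect (exists i, pseg (pos (f i)) (pos (f (ordS i))) (pos w)).
  have edge_i : [set f i; f (ordS i)] \in bd 2 c by rewrite bdE; apply/imsetP; exists i.
  exact: (@near_bd_edge c c_sub _ _ _ edge_i wi).
have [t ht] := generic_slope (pos w).
have hnz v : v != w -> ray_height (pos w) t (pos v) != 0.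
  by move=> vw; apply: ht; apply: contra vw => /eqP /posinj ->.
apply: (near_odd_crossings c_sub c_card (t := t)) => [s v sc vs|].
  by apply: hnz; apply: contraNneq (proj2 (cK s sc)) => <-.
rewrite bdE; apply: (odd_crossings_fence cvD cD n3 finj hB hI (Dpos w)) => [i wi|i].
  by apply: off; exists i.
by apply: hnz; apply: contraNneq hwf => <-; apply: imset_f.
Qed.

End Nodes.

Unset Implicit Arguments.
Set Strict Implicit.
Local Open Scope classical_set_scope.
Local Open Scope ring_scope.

Theorem mainTheorem3
  (R : realType)
  (Delta : set (pt R))
  (V : finType) (pos : V -> pt R)
  (n : nat) (f : 'I_n -> V)
  (rb : R) (w : V) :
  0 < rb ->
  convex_pl Delta -> compact Delta ->
  (3 <= n)%N -> injective f ->
  bdry_set Delta = \bigcup_(i in [set: 'I_n]) pseg (pos (f i)) (pos (f (ordS i))) ->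
  (forall i j : 'I_n, i != j ->
     pseg (pos (f i)) (pos (f (ordS i))) `&` pseg (pos (f j)) (pos (f (ordS j)))
     = if j == ordS i then [set pos (f j)]
       else if i == ordS j then [set pos (f i)] else set0) ->
  injective pos -> (forall v, Delta (pos v)) ->
  (forall i : 'I_n, eucl_dist (pos (f i)) (pos (f (ordS i))) < rb) ->
  w \notin [set f i | i : 'I_n]%SET ->
  dSG_criterion (rips2 pos rb) (fence f) ->
  H_trivial (rips2 pos rb) 2 ->
  (dSG_criterion (delete_vertex (rips2 pos rb) w) (fence f)
   <-> H_trivial (vlink (rips2 pos rb) w) 1).
Proof.
move=> rb0 cvD cD n3 finj hB hI posinj Dpos _ hwf [c [hc nb]] H2; split.
  by move/(delete_interior_node_not_dSG rb0 cvD cD n3 finj hB hI posinj Dpos hwf H2).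
move=> hL; exists c; split => //.
exact: (@rel_cycle2_delete_vertex _ _ (@rips2_face _ _ pos rb) (@rips2_card _ _ pos rb)
  _ _ _ (fence_avoid hwf) hL hc).
Qed.
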